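(* Let $K$ be a compact convex polytope of dimension $d$ in $\mathbb{R}^d$ with $N$ faces. Then $K$ is a finite intersection $$K=\bigcap_{j=1}^M S_j,$$ where each $S_j$ is either a $d$-dimensional simplex or a strip whose orthogonal cross-section is a lower-dimensional simplex. Moreover, each (codimension-one) face of each $S_j$ contains a face of $K$.
   Context: Faces of $K$ mean faces of codimension $1$. A strip in $\mathbb{R}^d$ is a set $L^{-1}(A)$, where $L\colon\mathbb{R}^d\to\mathbb{R}^j$ is a linear map of rank $j$, $j\in\{1,\dots,d\}$, and $A\subset\mathbb{R}^j$ is a compact convex set of dimension $j$. After an orthogonal change of coordinates the strip is $A\times\mathbb{R}^{d-j}$, and $A$ is its ($j$-dimensional) orthogonal cross-section. ''Lower-dimensional'' means $j<d$. When $A$ is a simplex, the faces of the strip are the sets $L^{-1}(G)$ with $G$ a facet of $A$. *)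

From mathcomp Require Import all_boot all_order all_algebra.
From mathcomp Require Import reals.
Set Implicit Arguments. Unset Strict Implicit. Unset Printing Implicit Defensive.
Import Order.TTheory GRing.Theory Num.Theory.
Local Open Scope ring_scope.

Section Defs.
Variable R : realType.

Definition dotv n (a x : 'rV[R]_n) : R := \sum_(i < n) a 0 i * x 0 i.

Definition conv n m (p : 'I_m -> 'rV[R]_n) : 'rV[R]_n -> Prop :=
  fun x => exists w : 'I_m -> R,
    (forall i, 0 <= w i) /\ \sum_(i < m) w i = 1 /\ x = \sum_(i < m) w i *: p i.

Definition aff_indep n m (p : 'I_m -> 'rV[R]_n) : Prop :=
  forall c : 'I_m -> R, \sum_(i < m) c i = 0 -> \sum_(i < m) c i *: p i = 0 ->
    forall i, c i = 0.

(* K contains k+1 affinely independent points, i.e. dim aff K >= k *)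
Definition dim_ge n (k : nat) (K : 'rV[R]_n -> Prop) : Prop :=
  exists p : 'I_k.+1 -> 'rV[R]_n, aff_indep p /\ forall i, K (p i).

Definition polytope n (K : 'rV[R]_n -> Prop) : Prop :=
  exists m (p : 'I_m -> 'rV[R]_n), forall x, K x <-> conv p x.

Definition full_simplex n (S : 'rV[R]_n -> Prop) : Prop :=
  exists p : 'I_n.+1 -> 'rV[R]_n, aff_indep p /\ forall x, S x <-> conv p x.

(* facet (face of codimension 1) of a convex set K in R^n:
   intersection of K with a supporting hyperplane, of dimension n-1
   (i.e. containing n affinely independent points) *)
Definition facet n (K F : 'rV[R]_n -> Prop) : Prop :=
  exists (a : 'rV[R]_n) (b : R), a != 0 /\
    (forall x, K x -> dotv a x <= b) /\
    (forall x, F x <-> (K x /\ dotv a x = b)) /\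
    (exists q : 'I_n -> 'rV[R]_n, aff_indep q /\ forall i, F (q i)).

Definition subset n (A B : 'rV[R]_n -> Prop) : Prop := forall x, A x -> B x.

(* S is a d-dimensional simplex each of whose facets contains a facet of K,
   or a strip L^{-1}(A) with A a j-simplex in R^j, 0 < j < d, L linear of
   rank j, such that each face L^{-1}(G) (G a facet of A) contains a facet
   of K. *)
Definition good_piece d (K S : 'rV[R]_d -> Prop) : Prop :=
  (full_simplex S /\
     forall F, facet S F -> exists F', facet K F' /\ subset F' F)
  \/
  (exists (j : nat) (L : 'M[R]_(d, j)) (A : 'rV[R]_j -> Prop),
     (0 < j)%N /\ (j < d)%N /\ \rank L = j /\ full_simplex A /\
     (forall x, S x <-> A (x *m L)) /\
     forall G, facet A G ->
       exists F', facet K F' /\ subset F' (fun x => G (x *m L))).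

End Defs.

(* Write K as the convex hull of points p_i.  A hyperplane separating a point
   from K can be rotated about the vertices it touches until it passes through
   d affinely independent p_i, so K is the intersection of finitely many facet
   half-spaces a_t.x <= b_t.  As K is bounded, each -a_t is a nonnegative
   combination of the normals, and by Caratheodory of linearly independent
   ones a_e1, ..., a_ek with positive weights.  The half-spaces t, e1, ..., ek
   cut out a piece containing K, the preimage of a k-simplex under
   x |-> (x.a_ej)_j: a d-simplex if k = d and a strip otherwise.  Every facet
   of the piece lies on one of these facet hyperplanes of K, and K is the
   intersection of the pieces. *)

From mathcomp Require Import all_boot all_order all_algebra.
From mathcomp Require Import reals.
From mathcomp Require Import ring lra.
From Stdlib Require Import Classical.
Set Implicit Arguments. Unset Strict Implicit. Unset Printing Implicit Defensive.
Import Order.TTheory GRing.Theory Num.Theory.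
Local Open Scope ring_scope.

Section InnerProduct.
Variable R : realType.
Implicit Types n m : nat.

Lemma dotvC n (a x : 'rV[R]_n) : dotv a x = dotv x a.
Proof. by apply: eq_bigr => i _; rewrite mulrC. Qed.

Lemma dotvDl n (a b x : 'rV[R]_n) : dotv (a + b) x = dotv a x + dotv b x.
Proof. by rewrite /dotv -big_split; apply: eq_bigr => i _; rewrite mxE mulrDl. Qed.

Lemma dotvZl n c (a x : 'rV[R]_n) : dotv (c *: a) x = c * dotv a x.
Proof. by rewrite /dotv mulr_sumr; apply: eq_bigr => i _; rewrite mxE mulrA. Qed.

Lemma dotvNl n (a x : 'rV[R]_n) : dotv (- a) x = - dotv a x.
Proof. by rewrite -scaleN1r dotvZl mulN1r. Qed.

Lemma dotvBl n (a b x : 'rV[R]_n) : dotv (a - b) x = dotv a x - dotv b x.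
Proof. by rewrite dotvDl dotvNl. Qed.

Lemma dotv0l n (x : 'rV[R]_n) : dotv 0 x = 0.
Proof. by rewrite /dotv big1 // => i _; rewrite mxE mul0r. Qed.

Lemma dotv_suml n (I : finType) (F : I -> 'rV[R]_n) x :
  dotv (\sum_i F i) x = \sum_i dotv (F i) x.
Proof.
by rewrite /dotv exchange_big; apply: eq_bigr => j _; rewrite summxE mulr_suml.
Qed.

Lemma dotvDr n (a b x : 'rV[R]_n) : dotv x (a + b) = dotv x a + dotv x b.
Proof. by rewrite !(dotvC x) dotvDl. Qed.

Lemma dotvZr n c (a x : 'rV[R]_n) : dotv x (c *: a) = c * dotv x a.
Proof. by rewrite !(dotvC x) dotvZl. Qed.

Lemma dotvNr n (a x : 'rV[R]_n) : dotv x (- a) = - dotv x a.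
Proof. by rewrite !(dotvC x) dotvNl. Qed.

Lemma dotvBr n (a b x : 'rV[R]_n) : dotv x (a - b) = dotv x a - dotv x b.
Proof. by rewrite !(dotvC x) dotvBl. Qed.

Lemma dotv0r n (x : 'rV[R]_n) : dotv x 0 = 0.
Proof. by rewrite dotvC dotv0l. Qed.

Lemma dotv_comb n (I : finType) (w : I -> R) (p : I -> 'rV[R]_n) x :
  dotv x (\sum_i w i *: p i) = \sum_i w i * dotv x (p i).
Proof.
by rewrite dotvC dotv_suml; apply: eq_bigr => i _; rewrite dotvZl dotvC.
Qed.

Lemma dotv_gt0 n (a : 'rV[R]_n) : a != 0 -> 0 < dotv a a.
Proof.
case/rV0Pn => i ai; rewrite /dotv (bigD1 i) //= ltr_pwDl //.
  by rewrite -expr2 exprn_even_gt0.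
by apply: sumr_ge0 => j _; rewrite -expr2 sqr_ge0.
Qed.

Lemma dotv_delta n (j : 'I_n) (y : 'rV[R]_n) : dotv (delta_mx 0 j) y = y 0 j.
Proof.
rewrite /dotv (bigD1 j) //= mxE !eqxx mul1r big1 ?addr0 // => i /negbTE ij.
by rewrite mxE ij andbF mul0r.
Qed.

Lemma dotv_row n (lam : 'I_n -> R) (y : 'rV[R]_n) :
  dotv (\row_i lam i) y = \sum_i lam i * y 0 i.
Proof. by apply: eq_bigr => i _; rewrite mxE. Qed.

Lemma mul_rows_tr n k (z : 'I_k -> 'rV[R]_n) (x : 'rV[R]_n) j :
  (x *m (\matrix_i z i)^T) 0 j = dotv (z j) x.
Proof. by rewrite mxE dotvC; apply: eq_bigr => i _; rewrite !mxE. Qed.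

Definition homog n (x : 'rV[R]_n) : 'rV[R]_(n + 1) := row_mx x (const_mx 1).

Lemma dotv_homog n (w : 'rV[R]_(n + 1)) (x : 'rV[R]_n) :
  dotv w (homog x) = dotv (lsubmx w) x + rsubmx w 0 0.
Proof.
rewrite /dotv big_split_ord big_ord1 /homog row_mxEr !mxE mulr1; congr (_ + _).
by apply: eq_bigr => i _; rewrite row_mxEl mxE.
Qed.

Lemma comb_homog n (I : finType) (c : I -> R) (p : I -> 'rV[R]_n) :
  \sum_i c i *: homog (p i) = row_mx (\sum_i c i *: p i) (const_mx (\sum_i c i)).
Proof.
rewrite -[LHS]hsubmxK !linear_sum /=; congr row_mx.
  by apply: eq_bigr => i _; rewrite linearZ /= /homog row_mxKl.
apply/rowP => j; rewrite summxE mxE; apply: eq_bigr => i _.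
by rewrite linearZ /= /homog row_mxKr !mxE mulr1.
Qed.

End InnerProduct.

Section AffineIndependence.
Variable R : realType.
Implicit Types n k : nat.

Definition rconsf (T : Type) k (q : 'I_k -> T) (e : T) (i : 'I_k.+1) : T :=
  oapp q e (insub (val i)).

Lemma rconsf_widen T k (q : 'I_k -> T) e j :
  rconsf q e (widen_ord (leqnSn k) j) = q j.
Proof. by rewrite /rconsf insubT //= => lt_jk; congr q; apply: val_inj. Qed.

Lemma rconsf_max T k (q : 'I_k -> T) e : rconsf q e ord_max = e.
Proof. by rewrite /rconsf insubF //= ltnn. Qed.

Lemma ordS_cases k (i : 'I_k.+1) :
  i = ord_max \/ exists j : 'I_k, i = widen_ord (leqnSn k) j.
Proof.
case: (unliftP ord_max i) => [j ->|->]; last by left.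
by right; exists j; apply: val_inj; rewrite /= /bump leqNgt ltn_ord.
Qed.

Lemma sum_rconsf k (q : 'I_k -> R) e :
  \sum_(i < k.+1) rconsf q e i = \sum_(j < k) q j + e.
Proof.
by rewrite big_ord_recr rconsf_max; congr (_ + _); apply: eq_bigr => j _; rewrite rconsf_widen.
Qed.

Lemma eq_aff_indep n k (f g : 'I_k -> 'rV[R]_n) :
  f =1 g -> aff_indep f -> aff_indep g.
Proof.
move=> fg hf c hs hv; apply: hf => //; rewrite -[RHS]hv.
by apply: eq_bigr => i _; rewrite fg.
Qed.

Lemma aff_indep_ord0 n (q : 'I_0 -> 'rV[R]_n) : aff_indep q.
Proof. by move=> c _ _ []. Qed.

Lemma aff_indep_rconsf n k (q : 'I_k -> 'rV[R]_n) e u v :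
  aff_indep q -> (forall j, dotv u (q j) = v) -> dotv u e != v ->
  aff_indep (rconsf q e).
Proof.
move=> hq hu he c; rewrite !big_ord_recr /= rconsf_max => hs hv.
rewrite (eq_bigr (fun j => c (widen_ord (leqnSn k) j) *: q j)) in hv; last first.
  by move=> j _; rewrite rconsf_widen.
have cm : c ord_max = 0.
  have := congr1 (dotv u) hv; rewrite dotv0r dotvDr dotv_comb dotvZr.
  under eq_bigr do rewrite hu.
  rewrite -mulr_suml.
  have -> : \sum_(j < k) c (widen_ord (leqnSn k) j) = - c ord_max.
    by apply/eqP; rewrite -addr_eq0; apply/eqP.
  move=> h; have : c ord_max * (dotv u e - v) = 0.
    by rewrite mulrBr -h; ring.
  by move/eqP; rewrite mulf_eq0 subr_eq0 (negbTE he) orbF => /eqP.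
rewrite cm addr0 in hs; rewrite cm scale0r addr0 in hv.
move=> i; case: (ordS_cases i) => [-> //|[j ->]]; exact: hq hs hv j.
Qed.

Lemma aff_indep_homog n k (q : 'I_k -> 'rV[R]_n) :
  aff_indep q -> row_free (\matrix_i homog (q i)).
Proof.
move=> hq; apply: inj_row_free => c; rewrite mulmx_sum_row.
under eq_bigr => i _ do rewrite rowK.
rewrite comb_homog -row_mx0 => /eq_row_mx[hv /rowP/(_ 0)]; rewrite !mxE => hs.
by apply/rowP => i; rewrite mxE (hq (fun i => c 0 i) hs hv).
Qed.

Lemma aff_basis_hyperplane_eq0 n (q : 'I_n.+1 -> 'rV[R]_n) (u : 'rV[R]_n) v :
  aff_indep q -> (forall i, dotv u (q i) = v) -> u = 0 /\ v = 0.
Proof.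
move=> /aff_indep_homog hq hu; set B := \matrix_i homog (q i) in hq.
have hBT : row_free B^T by rewrite /row_free mxrank_tr (eqP hq) addn1.
pose w := row_mx u (const_mx (- v)) : 'rV[R]_(n + 1).
have /(row_free_inj hBT) : w *m B^T = 0 *m B^T.
  apply/rowP => j; rewrite mul0mx mul_rows_tr dotvC dotv_homog.
  by rewrite row_mxKl row_mxKr hu !mxE subrr.
move/eqP; rewrite row_mx_eq0 => /andP[/eqP -> /eqP /rowP /(_ 0)].
by rewrite !mxE => /eqP; rewrite oppr_eq0 => /eqP.
Qed.

Lemma hyperplane_unique n (q : 'I_n -> 'rV[R]_n) (a a' : 'rV[R]_n) b b' :
  aff_indep q -> a != 0 ->
  (forall j, dotv a (q j) = b) -> (forall j, dotv a' (q j) = b') ->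
  exists c, a' = c *: a /\ b' = c * b.
Proof.
move=> hq a0 ha ha'.
have [e he] : exists e, dotv a e != b.
  case: (eqVneq b 0) => [->|b0]; last by exists 0; rewrite dotv0r eq_sym.
  by exists a; rewrite gt_eqF // dotv_gt0.
have hne : dotv a e - b != 0 by rewrite subr_eq0.
pose c := (dotv a' e - b') / (dotv a e - b).
have [u0 v0] : a' - c *: a = 0 /\ b' - c * b = 0.
  apply: (aff_basis_hyperplane_eq0 (aff_indep_rconsf hq ha he)) => i.
  case: (ordS_cases i) => [->|[j ->]]; rewrite ?rconsf_max ?rconsf_widen dotvBl dotvZl.
    by rewrite /c; field.
  by rewrite ha ha'.
by exists c; split; apply/eqP; rewrite -subr_eq0 ?u0 ?v0.
Qed.

Lemma exists_orthogonal n k (z : 'I_k -> 'rV[R]_n) :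
  (k < n)%N -> exists2 w : 'rV[R]_n, w != 0 & forall j, dotv w (z j) = 0.
Proof.
move=> kn; set Z := (\matrix_i z i)^T.
have : kermx Z != 0.
  rewrite -mxrank_eq0 mxrank_ker -lt0n subn_gt0 mxrank_tr.
  exact: leq_ltn_trans (rank_leq_row _) kn.
case/rowV0Pn => w /sub_kermxP hw w0; exists w => // j.
by rewrite dotvC -mul_rows_tr -/Z hw mxE.
Qed.

End AffineIndependence.

Section Cones.
Variable R : realType.
Implicit Types n m k : nat.

Definition cone n m (v : 'I_m -> 'rV[R]_n) (y : 'rV[R]_n) : Prop :=
  exists2 l : 'I_m -> R, (forall i, 0 <= l i) & y = \sum_i l i *: v i.

Lemma min_ratio (I : finType) (al de : I -> R) :
  (forall i, 0 <= al i) -> (exists i, 0 < de i) ->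
  exists r s, [/\ 0 < de r, 0 <= s, al r = s * de r & forall i, s * de i <= al i].
Proof.
move=> al0 [i0 hi0].
have [r hr hmin] := @arg_minP _ R I i0 (fun i => 0 < de i) (fun i => al i / de i) hi0.
exists r, (al r / de r); split => //.
- by rewrite divr_ge0 // ltW.
- by rewrite mulrVK // unitfE gt_eqF.
- move=> i; case: (ltP 0 (de i)) => hi; first by rewrite -ler_pdivlMr // hmin.
  by apply: le_trans (al0 i); rewrite mulr_ge0_le0 // divr_ge0 // ltW.
Qed.

Definition proj_along n (z u x : 'rV[R]_n) := x - (dotv z x / dotv z u) *: u.

Lemma dotv_proj_along n (z u z' x : 'rV[R]_n) :
  dotv (z' - (dotv z' u / dotv z u) *: z) x = dotv z' (proj_along z u x).
Proof. by rewrite /proj_along dotvBl dotvBr dotvZl dotvZr (dotvC z x); ring. Qed.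

Lemma proj_along_id n (z u : 'rV[R]_n) : dotv z u != 0 -> proj_along z u u = 0.
Proof. by move=> zu; rewrite /proj_along divff ?scale1r ?subrr. Qed.

Section Farkas.
Variables (n m : nat) (v : 'I_m.+1 -> 'rV[R]_n) (z : 'rV[R]_n).
Let v' j := v (widen_ord (leqnSn m) j).
Let vm := v ord_max.
Hypothesis zvm : dotv z vm < 0.

Lemma cone_Sr y mu : cone v' y -> 0 <= mu -> cone v (y + mu *: vm).
Proof.
case=> l l0 -> mu0; exists (rconsf l mu).
  by move=> i; case: (ordS_cases i) => [->|[j ->]]; rewrite ?rconsf_max ?rconsf_widen.
rewrite big_ord_recr rconsf_max; congr (_ + _).
by apply: eq_bigr => j _; rewrite rconsf_widen.
Qed.

Lemma cone_unproject y :
  (forall j, 0 <= dotv z (v' j)) -> dotv z y < 0 ->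
  cone (fun j => proj_along z vm (v' j)) (proj_along z vm y) -> cone v y.
Proof.
move=> zv' zy [l l0 hl].
pose mu := (dotv z y - \sum_j l j * dotv z (v' j)) / dotv z vm.
have -> : y = \sum_j l j *: v' j + mu *: vm.
  have -> : y = proj_along z vm y + (dotv z y / dotv z vm) *: vm by rewrite subrK.
  rewrite hl; under eq_bigr do rewrite /proj_along scalerBr scalerA.
  rewrite sumrB -scaler_suml -addrA -scaleNr -scalerDl /mu; congr (_ + _ *: _).
  rewrite mulrBl addrC; congr (_ - _); rewrite mulr_suml.
  by apply: eq_bigr => j _; rewrite mulrA.
apply: cone_Sr; first by exists l.
rewrite /mu ler_ndivlMr // mul0r subr_le0; apply: le_trans (ltW zy) _.
by apply: sumr_ge0 => j _; apply: mulr_ge0.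
Qed.

End Farkas.

(* Fourier-Motzkin: if the certificate [z] for the first [m] vectors fails on
   the last one, project everything along it onto the hyperplane [z.x = 0]. *)
Lemma farkas n m (v : 'I_m -> 'rV[R]_n) (y : 'rV[R]_n) :
  cone v y \/ exists2 z, (forall i, 0 <= dotv z (v i)) & dotv z y < 0.
Proof.
elim: m v y => [|m IH] v y.
  case: (eqVneq y 0) => [->|y0]; first by left; exists (fun _ => 0); rewrite ?big_ord0.
  by right; exists (- y) => [[] //|]; rewrite dotvNl oppr_lt0 dotv_gt0.
set v' := fun j => v (widen_ord (leqnSn m) j); set vm := v ord_max.
case: (IH v' y) => [hy|[z zv' zy]].
  by left; rewrite -[y]addr0 -(scale0r vm); apply: cone_Sr.
case: (leP 0 (dotv z vm)) => zvm.
  by right; exists z => // i; case: (ordS_cases i) => [->|[j ->]] //; exact: zv'.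
case: (IH (fun j => proj_along z vm (v' j)) (proj_along z vm y)) => [hy|[z' z'v z'y]].
  by left; apply: cone_unproject hy.
right; exists (z' - (dotv z' vm / dotv z vm) *: z) => [i|].
  rewrite dotv_proj_along; case: (ordS_cases i) => [->|[j ->]]; last exact: z'v.
  by rewrite proj_along_id ?dotv0r // lt_eqF.
by rewrite dotv_proj_along.
Qed.

Lemma conv_separation n m (p : 'I_m -> 'rV[R]_n) x :
  ~ conv p x -> exists a b, (forall i, dotv a (p i) <= b) /\ b < dotv a x.
Proof.
move=> px; case: (farkas (fun i => homog (p i)) (homog x)) => [[l l0]|[z zp zx]].
  rewrite comb_homog => /eq_row_mx[hx /rowP/(_ 0)]; rewrite !mxE => hl.
  by case: px; exists l; split; last split.
exists (- lsubmx z), (rsubmx z 0 0); rewrite dotvNl; split; last first.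
  by move: zx; rewrite dotv_homog; lra.
by move=> i; have := zp i; rewrite dotv_homog dotvNl; lra.
Qed.

Definition cone_rep n N (a : 'I_N -> 'rV[R]_n) (y : 'rV[R]_n) k :=
  exists (e : 'I_k -> 'I_N) (l : 'I_k -> R),
    (forall j, 0 <= l j) /\ y = \sum_j l j *: a (e j).

Lemma cone_rep_drop n N (a : 'I_N -> 'rV[R]_n) y k (e : 'I_k.+1 -> 'I_N) l j :
  (forall j, 0 <= l j) -> y = \sum_j l j *: a (e j) -> l j = 0 -> cone_rep a y k.
Proof.
move=> l0 hy lj; exists (fun i => e (lift j i)), (fun i => l (lift j i)); split => //.
by rewrite hy (bigD1_ord j) //= lj scale0r add0r.
Qed.

Lemma cone_rep_reduce n N (a : 'I_N -> 'rV[R]_n) y k (e : 'I_k.+1 -> 'I_N) l :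
  (forall j, 0 <= l j) -> y = \sum_j l j *: a (e j) ->
  ~~ row_free (\matrix_j a (e j)) -> cone_rep a y k.
Proof.
rewrite -kermx_eq0 => l0 hy /rowV0Pn[w /sub_kermxP].
rewrite mulmx_sum_row; under eq_bigr => j _ do rewrite rowK.
move=> hw /rV0Pn[j0 wj0].
have [mu [hmu [j1 mu1]]] : exists mu : 'I_k.+1 -> R,
    \sum_j mu j *: a (e j) = 0 /\ exists j, 0 < mu j.
  case: (ltP 0 (w 0 j0)) => h; first by exists (fun j => w 0 j); split => //; exists j0.
  exists (fun j => - w 0 j); split.
    by under eq_bigr do rewrite scaleNr; rewrite sumrN hw oppr0.
  by exists j0; rewrite oppr_gt0 lt_neqAle wj0.
have [r [s [_ _ lr hs]]] := min_ratio l0 (ex_intro _ j1 mu1).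
apply: (@cone_rep_drop _ _ _ _ _ e (fun j => l j - s * mu j) r).
- by move=> j; rewrite subr_ge0.
- rewrite hy; under [RHS]eq_bigr do rewrite scalerBl -scalerA.
  by rewrite sumrB -scaler_sumr hmu scaler0 subr0.
- by rewrite lr subrr.
Qed.

Lemma caratheodory n N (a : 'I_N -> 'rV[R]_n) y : y != 0 -> cone a y ->
  exists k (e : 'I_k -> 'I_N) (l : 'I_k -> R), [/\ (0 < k)%N, forall j, 0 < l j,
    y = \sum_j l j *: a (e j) & row_free (\matrix_j a (e j))].
Proof.
move=> y0 [l1 l1_ge0 hy1]; have [k hk] : exists k, cone_rep a y k by exists N, id, l1.
elim/ltn_ind: k hk => k IH [e [l [l0 hy]]].
case: k e l l0 hy IH => [|k] e l l0 hy IH; first by move: y0; rewrite hy big_ord0 eqxx.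
case: (classic (exists j, l j = 0)) => [[j lj]|lpos].
  exact: IH _ (ltnSn k) (cone_rep_drop l0 hy lj).
have [free|dep] := boolP (row_free (\matrix_j a (e j))).
  exists k.+1, e, l; split => // j; rewrite lt_def l0 andbT.
  by apply/eqP => lj; apply: lpos; exists j.
exact: IH _ (ltnSn k) (cone_rep_reduce l0 hy dep).
Qed.

End Cones.

Section FacetInequalities.
Variable R : realType.
Variables (d m : nat) (p : 'I_m -> 'rV[R]_d).

Definition valid_ineq (a : 'rV[R]_d) b := forall i, dotv a (p i) <= b.

Definition tight_on (a : 'rV[R]_d) b k (t : 'I_k -> 'I_m) :=
  aff_indep (fun j => p (t j)) /\ forall j, dotv a (p (t j)) = b.

Definition facet_ineq (a : 'rV[R]_d) b :=
  [/\ a != 0, valid_ineq a b & exists t : 'I_d -> 'I_m, tight_on a b t].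

Lemma conv_vertex i : conv p (p i).
Proof.
exists (fun j => (j == i)%:R); split; first by move=> j; rewrite ler0n.
split; first by rewrite (bigD1 i) //= eqxx big1 ?addr0 // => j /negbTE ->.
by rewrite (bigD1 i) //= eqxx scale1r big1 ?addr0 // => j /negbTE ->; rewrite scale0r.
Qed.

Lemma conv_dotv_le a b x : valid_ineq a b -> conv p x -> dotv a x <= b.
Proof.
move=> hab [w [w0 [w1 ->]]]; rewrite dotv_comb -[b]mul1r -w1 mulr_suml.
by apply: ler_sum => i _; apply: ler_wpM2l.
Qed.

Lemma conv_dotv_eq a b x : (forall i, dotv a (p i) = b) -> conv p x -> dotv a x = b.
Proof.
move=> hab [w [w0 [w1 ->]]]; rewrite dotv_comb -[b]mul1r -w1 mulr_suml.
by apply: eq_bigr => i _; rewrite hab.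
Qed.

Lemma conv_dotv_bounded a : exists B, forall x, conv p x -> dotv a x <= B.
Proof.
exists (\sum_i `|dotv a (p i)|) => x; apply: conv_dotv_le => i.
apply: le_trans (ler_norm _) _; rewrite (bigD1 i) //= lerDl.
by apply: sumr_ge0 => j _.
Qed.

Lemma exists_notin_conv : (0 < d)%N -> exists x, ~ conv p x.
Proof.
move=> d0; set e := delta_mx 0 (Ordinal d0) : 'rV[R]_d.
have [B hB] := conv_dotv_bounded e; exists ((B + 1) *: e) => /hB.
by rewrite dotvZr dotv_delta !mxE !eqxx mulr1; lra.
Qed.

Lemma facet_ineq_facet (K : 'rV[R]_d -> Prop) a b :
  (forall x, K x <-> conv p x) -> facet_ineq a b ->
  facet K (fun x => K x /\ dotv a x = b).
Proof.
move=> hK [a0 hab [t [ht hat]]]; exists a, b; split => //; split.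
  by move=> x /hK; apply: conv_dotv_le.
split => //; exists (fun j => p (t j)); split => // j.
by split => //; apply/hK; apply: conv_vertex.
Qed.

Hypothesis full_dim : dim_ge d (conv p).

Lemma vertices_hyperplane_eq0 u v :
  (forall i, dotv u (p i) = v) -> u = 0 /\ v = 0.
Proof.
move=> huv; have [q [hq qp]] := full_dim.
by apply: (aff_basis_hyperplane_eq0 hq) => i; apply: conv_dotv_eq (qp i).
Qed.

Lemma exists_pivot x k (t : 'I_k -> 'I_m) : (k < d)%N ->
  exists u v, [/\ forall j, dotv u (p (t j)) = v, dotv u x = v
                & exists i, v < dotv u (p i)].
Proof.
move=> kd; have kd1 : (k.+1 < d + 1)%N by rewrite addn1.
have [w w0 hw] := exists_orthogonal (rconsf (fun j => homog (p (t j))) (homog x)) kd1.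
set u := lsubmx w; set v := - rsubmx w 0 0.
have huv y : dotv w (homog y) = 0 -> dotv u y = v by rewrite dotv_homog /v; lra.
have ht j : dotv u (p (t j)) = v by apply: huv; rewrite -(hw (widen_ord _ j)) rconsf_widen.
have hx : dotv u x = v by apply: huv; rewrite -(hw ord_max) rconsf_max.
have [i hi] : exists i, dotv u (p i) != v.
  apply: NNPP => hp; have [u0 v0] : u = 0 /\ v = 0.
    by apply: vertices_hyperplane_eq0 => i; apply/eqP/negPn/negP => hi; apply: hp; exists i.
  move/eqP: w0; apply; rewrite -[w]hsubmxK -/u u0 -row_mx0; congr row_mx.
  by apply/rowP => j; rewrite (ord1 j) [RHS]mxE; move: v0; rewrite /v; lra.
case: (ltP v (dotv u (p i))) => [hvi|hiv]; first by exists u, v; split => //; exists i.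
exists (- u), (- v); split; [by move=> j; rewrite dotvNl ht | by rewrite dotvNl hx |].
by exists i; rewrite dotvNl ltrN2 lt_neqAle hi hiv.
Qed.

(* Rotate about the points [p (t j)], keeping [x] strictly outside, until the
   hyperplane meets a further vertex [p r]. *)
Lemma tighten_step x a b k (t : 'I_k -> 'I_m) : (k < d)%N ->
  valid_ineq a b -> b < dotv a x -> tight_on a b t ->
  exists a' b' (t' : 'I_k.+1 -> 'I_m),
    [/\ valid_ineq a' b', b' < dotv a' x & tight_on a' b' t'].
Proof.
move=> kd hab hx [ht hat].
have [u [v [hut hux [i0 hi0]]]] := exists_pivot x t kd.
have slack i : 0 <= b - dotv a (p i) by rewrite subr_ge0.
have piv : exists i, 0 < dotv u (p i) - v by exists i0; rewrite subr_gt0.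
have [r [s [hr s0 hsr hs]]] := min_ratio slack piv.
exists (a + s *: u), (b + s * v), (rconsf t r); split.
- by move=> i; have := hs i; rewrite dotvDl dotvZl; nra.
- by rewrite dotvDl dotvZl hux; lra.
split.
  apply: (@eq_aff_indep _ _ _ (rconsf (fun j => p (t j)) (p r))).
    by move=> i; case: (ordS_cases i) => [->|[j ->]]; rewrite ?rconsf_max ?rconsf_widen.
  by apply: (aff_indep_rconsf ht hut); rewrite -subr_eq0 gt_eqF.
move=> i; case: (ordS_cases i) => [->|[j ->]]; rewrite ?rconsf_max ?rconsf_widen.
  by rewrite dotvDl dotvZl; move: hsr => /=; nra.
by rewrite dotvDl dotvZl hut hat.
Qed.

Lemma facet_separation x : (0 < d)%N -> ~ conv p x ->
  exists a b, facet_ineq a b /\ b < dotv a x.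
Proof.
move=> d0 px; have [a [b [hab hx]]] := conv_separation px.
have tighten k : (k <= d)%N -> exists a b (t : 'I_k -> 'I_m),
    [/\ valid_ineq a b, b < dotv a x & tight_on a b t].
  elim: k => [_|k IH kd].
    exists a, b, (widen_ord (leq0n m)); split => //.
    by split => [|[]//]; apply: aff_indep_ord0.
  have [a' [b' [t [h1 h2 h3]]]] := IH (ltnW kd).
  exact: tighten_step kd h1 h2 h3.
have [a' [b' [t [h1 h2 [ht hat]]]]] := tighten d (leqnn d).
exists a', b'; split => //; split => //; last by exists t.
apply/eqP => a0; move: h2 (hat (Ordinal d0)); rewrite a0 !dotv0l; lra.
Qed.

Lemma facet_ineq_unique a b a' b' (t : 'I_d -> 'I_m) :
  facet_ineq a b -> facet_ineq a' b' -> tight_on a b t -> tight_on a' b' t ->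
  exists2 c, 0 < c & a' = c *: a /\ b' = c * b.
Proof.
move=> [a0 hab _] [a'0 ha'b' _] [ht hat] [_ ha't].
have [c [ea eb]] := hyperplane_unique ht a0 hat ha't.
exists c => //; case: (ltgtP c 0) => hc //.
  have [a00 _] : a = 0 /\ b = 0.
    apply: vertices_hyperplane_eq0 => i; apply/eqP; rewrite eq_le hab /=.
    by have := ha'b' i; rewrite ea eb dotvZl ler_nM2l.
  by rewrite a00 eqxx in a0.
by move: a'0; rewrite ea hc scale0r eqxx.
Qed.

(* The facet inequality through [p \o t] if there is one, any other otherwise. *)
Lemma facet_choice (t : 'I_d -> 'I_m) : (0 < d)%N ->
  exists ab : 'rV[R]_d * R, facet_ineq ab.1 ab.2 /\
    forall a b, facet_ineq a b -> tight_on a b t -> tight_on ab.1 ab.2 t.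
Proof.
move=> d0; case: (classic (exists a b, facet_ineq a b /\ tight_on a b t)).
  by case=> a [b [hab ht]]; exists (a, b).
move=> none; have [x0 px0] := exists_notin_conv d0.
have [a0 [b0 [hab0 _]]] := facet_separation d0 px0.
by exists (a0, b0); split => // a b hab ht; case: none; exists a, b.
Qed.

Lemma facet_family : (0 < d)%N ->
  exists N (fa : 'I_N -> 'rV[R]_d) (fb : 'I_N -> R),
    (forall t, facet_ineq (fa t) (fb t)) /\
    (forall x, ~ conv p x -> exists t, fb t < dotv (fa t) x).
Proof.
move=> d0; have [f hf] := fin_all_exists (fun t : {ffun 'I_d -> 'I_m} => facet_choice t d0).
exists #|{ffun 'I_d -> 'I_m}|, (fun i => (f (enum_val i)).1), (fun i => (f (enum_val i)).2).
split => [i|x px]; first by case: (hf (enum_val i)).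
have [a [b [hab hx]]] := facet_separation d0 px; have [_ _ [t [ht hat]]] := hab.
pose t' := [ffun j => t j]; have ht' : tight_on a b t'.
  split => [|j]; last by rewrite ffunE.
  by apply: eq_aff_indep ht => j; rewrite ffunE.
have [hf' /(_ a b hab ht') hft] := hf t'.
have [c c0 [ea eb]] := facet_ineq_unique hab hf' ht' hft.
by exists (enum_rank t'); rewrite enum_rankK ea eb dotvZl ltr_pM2l.
Qed.

End FacetInequalities.

Section SimplexByInequalities.
Variable R : realType.
Variables (k : nat) (lam bb : 'I_k -> R) (b0 : R).

Definition simplex_normal (f : option 'I_k) : 'rV[R]_k :=
  if f is Some j then delta_mx 0 j else - \row_j lam j.

Definition simplex_bound (f : option 'I_k) : R := if f is Some j then bb j else b0.

Definition simplex_ineqs (y : 'rV[R]_k) : Prop :=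
  forall f, dotv (simplex_normal f) y <= simplex_bound f.

Lemma simplex_ineqsP y :
  simplex_ineqs y <-> (forall j, y 0 j <= bb j) /\ - \sum_j lam j * y 0 j <= b0.
Proof.
split => [hy|[hb hl] [j|]]; rewrite /= ?dotv_delta ?dotvNl ?dotv_row //.
by split => [j|]; [have := hy (Some j) | have := hy None];
  rewrite /= ?dotv_delta ?dotvNl ?dotv_row.
Qed.

Hypothesis lam_gt0 : forall j, 0 < lam j.

Lemma simplex_normal_neq0 f : (0 < k)%N -> simplex_normal f != 0.
Proof.
move=> k0; case: f => [j|] /=.
  by apply/eqP => /matrixP/(_ 0 j); rewrite !mxE !eqxx => /eqP; rewrite oner_eq0.
rewrite oppr_eq0; apply/eqP => /rowP/(_ (Ordinal k0)); rewrite !mxE => l0.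
by have := lam_gt0 (Ordinal k0); rewrite l0 ltxx.
Qed.

Let D := b0 + \sum_j lam j * bb j.
Hypothesis D_gt0 : 0 < D.

(* Vertex [ord_max] is the corner [bb]; vertex [j < k] moves it along
   coordinate [j] until the last inequality becomes tight. *)
Definition simplex_vertex (i : 'I_k.+1) : 'rV[R]_k :=
  \row_j (bb j - (if j == i :> nat then D / lam j else 0)).

Lemma comb_simplex_vertex (w : 'I_k.+1 -> R) j :
  (\sum_i w i *: simplex_vertex i) 0 j
    = bb j * \sum_i w i - w (widen_ord (leqnSn k) j) * (D / lam j).
Proof.
rewrite summxE; under eq_bigr do rewrite !mxE mulrBr.
rewrite sumrB mulr_sumr; congr (_ - _); first by apply: eq_bigr => i _; rewrite mulrC.
rewrite (bigD1 (widen_ord (leqnSn k) j)) //= eqxx big1 ?addr0 // => i /negbTE ij.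
have -> : (j == i :> nat) = false by rewrite eq_sym; exact: ij.
by rewrite mulr0.
Qed.

Lemma aff_indep_simplex_vertex : aff_indep simplex_vertex.
Proof.
move=> c hs hv.
have hc j : c (widen_ord (leqnSn k) j) = 0.
  have /rowP/(_ j) := hv; rewrite comb_simplex_vertex hs mulr0 add0r mxE => /eqP.
  by rewrite oppr_eq0 !mulf_eq0 invr_eq0 (gt_eqF D_gt0) (gt_eqF (lam_gt0 j)) !orbF => /eqP.
move=> i; case: (ordS_cases i) => [->|[j ->] //].
by move: hs; rewrite big_ord_recr /= big1 ?add0r // => j _.
Qed.

Lemma simplex_ineqs_conv y : simplex_ineqs y -> conv simplex_vertex y.
Proof.
move=> /simplex_ineqsP[hb hl]; pose z j := lam j * (bb j - y 0 j) / D.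
have hz : \sum_j z j <= 1.
  rewrite -mulr_suml ler_pdivrMr // mul1r /D.
  under eq_bigr do rewrite mulrBr; rewrite sumrB; lra.
exists (rconsf z (1 - \sum_j z j)); split; last split.
- move=> i; case: (ordS_cases i) => [->|[j ->]]; rewrite ?rconsf_max ?rconsf_widen.
    by rewrite subr_ge0.
  by rewrite divr_ge0 ?(ltW D_gt0) // mulr_ge0 ?(ltW (lam_gt0 j)) // subr_ge0.
- by rewrite sum_rconsf subrKC.
- apply/rowP => j; rewrite comb_simplex_vertex sum_rconsf subrKC mulr1 rconsf_widen.
  by rewrite /z; field; rewrite (gt_eqF (lam_gt0 j)) (gt_eqF D_gt0).
Qed.

Lemma conv_simplex_ineqs y : conv simplex_vertex y -> simplex_ineqs y.
Proof.
move=> [w [w0 [w1 ->]]]; apply/simplex_ineqsP; split => [j|].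
  rewrite comb_simplex_vertex w1 mulr1 gerBl mulr_ge0 //.
  by rewrite divr_ge0 ?(ltW D_gt0) ?(ltW (lam_gt0 j)).
have -> : \sum_j lam j * (\sum_i w i *: simplex_vertex i) 0 j
    = \sum_j lam j * bb j - D * \sum_j w (widen_ord (leqnSn k) j).
  rewrite mulr_sumr -sumrB; apply: eq_bigr => j _; rewrite comb_simplex_vertex w1 mulr1.
  by field; rewrite (gt_eqF (lam_gt0 j)).
have : \sum_j w (widen_ord (leqnSn k) j) <= 1.
  by rewrite -w1 big_ord_recr /= lerDl.
rewrite -(ler_pM2l D_gt0) mulr1 /D; lra.
Qed.

Lemma simplex_ineqs_full_simplex : full_simplex simplex_ineqs.
Proof.
exists simplex_vertex; split; first exact: aff_indep_simplex_vertex.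
by move=> y; split; [apply: simplex_ineqs_conv | apply: conv_simplex_ineqs].
Qed.

End SimplexByInequalities.

Section LinearImage.
Variable R : realType.

Lemma full_simplex_mulmx n k (L : 'M[R]_(n, k)) (A : 'rV[R]_k -> Prop) :
  k = n -> row_free L -> full_simplex A -> full_simplex (fun x => A (x *m L)).
Proof.
move=> kn; subst k; rewrite row_free_unit => uL [v [hv hA]].
exists (fun i => v i *m invmx L); split.
  move=> c hs hc; apply: hv => //.
  have := congr1 (mulmx^~ L) hc; rewrite /= mul0mx mulmx_suml => h; rewrite -[RHS]h.
  by apply: eq_bigr => i _; rewrite -scalemxAl mulmxKV.
move=> x; rewrite hA; split => [[w [w0 [w1 hw]]]|[w [w0 [w1 hw]]]]; exists w; do 2!split => //.
  by rewrite -[x](mulmxK uL) hw mulmx_suml; apply: eq_bigr => i _; rewrite scalemxAl.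
by rewrite hw mulmx_suml; apply: eq_bigr => i _; rewrite -scalemxAl mulmxKV.
Qed.

End LinearImage.

Section PolyhedronFacets.
Variable R : realType.

Lemma exists_pos_lb (J : finType) (s : J -> R) :
  (forall i, 0 < s i) -> exists2 e, 0 < e & forall i, e <= s i.
Proof.
move=> s0; set S := 1 + \sum_i (s i)^-1.
have S0 : 0 < S by rewrite ltr_pwDl // sumr_ge0 // => i _; rewrite invr_ge0 ltW.
exists S^-1; first by rewrite invr_gt0.
move=> i; rewrite -[s i]invrK lef_pV2 ?posrE ?invr_gt0 //.
rewrite /S (bigD1 i) //= addrCA ler_wpDr // addr_ge0 // sumr_ge0 // => j _.
by rewrite invr_ge0 ltW.
Qed.

Variables (n : nat) (I : finType) (h : I -> 'rV[R]_n) (c : I -> R).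
Variable P : 'rV[R]_n -> Prop.
Hypothesis hP : forall y, P y <-> forall f, dotv (h f) y <= c f.

Lemma supporting_hyperplane_tight a b r : a != 0 ->
  (forall y, P y -> dotv a y <= b) -> dotv a r = b -> exists f, c f <= dotv (h f) r.
Proof.
move=> a0 hab har; apply: NNPP => strict.
have slack f : 0 < (c f - dotv (h f) r) / (`|dotv (h f) a| + 1).
  apply: divr_gt0; last by rewrite ltr_pwDr.
  by rewrite subr_gt0 ltNge; apply/negP => hf; apply: strict; exists f.
have [e e0 he] := exists_pos_lb slack.
suff /hab : P (r + e *: a).
  by rewrite dotvDr dotvZr har; have := mulr_gt0 e0 (dotv_gt0 a0); lra.
apply/hP => f; rewrite dotvDr dotvZr.
have := he f; rewrite ler_pdivlMr ?ltr_pwDr // => hf.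
have : e * dotv (h f) a <= e * `|dotv (h f) a|.
  by apply: ler_wpM2l; [exact: ltW | exact: ler_norm].
nra.
Qed.

Lemma facet_in_hyperplane (f0 : I) G :
  facet P G -> exists f, forall y, G y -> dotv (h f) y = c f.
Proof.
move=> [a [b [a0 [hab [hG _]]]]]; apply: NNPP => none.
have off f : exists y, G y /\ dotv (h f) y < c f.
  apply: NNPP => hf; apply: none; exists f => y Gy.
  apply/eqP; rewrite eq_le (proj1 (hP y) (proj1 (proj1 (hG y) Gy))) /= leNgt.
  by apply/negP => hy; apply: hf; exists y.
have [g hg] := fin_all_exists off.
have gP f : P (g f) /\ dotv a (g f) = b by apply/hG; case: (hg f).
have N0 : 0 < #|I|%:R :> R by rewrite ltr0n; apply/card_gt0P; exists f0.
have avg (x : R) : \sum_(f : I) (#|I|%:R)^-1 * x = x.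
  by rewrite -mulr_sumr sumr_const -[#|xpredT|]/#|I| -[x *+ _]mulr_natl mulKf ?gt_eqF.
pose r := \sum_f (#|I|%:R)^-1 *: g f.
have [f] : exists f, c f <= dotv (h f) r.
  apply: (supporting_hyperplane_tight a0 hab).
  by rewrite dotv_comb -[RHS]avg; apply: eq_bigr => f _; rewrite (proj2 (gP f)).
apply/negP; rewrite -ltNge dotv_comb -[X in _ < X]avg.
rewrite (bigD1 f) //= [X in _ < X](bigD1 f) //=; apply: ltr_leD.
  by rewrite ltr_pM2l ?invr_gt0 //; case: (hg f).
by apply: ler_sum => f' _; rewrite ler_pM2l ?invr_gt0 //; case: (gP f') => /hP.
Qed.

Lemma facet_sub_ineq (f0 : I) G : (forall f, h f != 0) -> facet P G ->
  exists f, forall y, P y -> dotv (h f) y = c f -> G y.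
Proof.
move=> h0 hG; have [f hf] := facet_in_hyperplane f0 hG.
move: hG => [a [b [a0 [_ [hG [q [hq qG]]]]]]].
have qab j : dotv a (q j) = b by case/hG: (qG j).
have [c' [ha hc]] := hyperplane_unique hq a0 qab (fun j => hf _ (qG j)).
have c'0 : c' != 0 by apply: contraNneq (h0 f) => c'0; rewrite ha c'0 scale0r.
exists f => y Py hy; apply/hG; split => //.
by apply: (mulfI c'0); rewrite -hc -hy ha dotvZl.
Qed.

End PolyhedronFacets.

Section Pieces.
Variable R : realType.
Variables (d m : nat) (p : 'I_m -> 'rV[R]_d) (K : 'rV[R]_d -> Prop).
Hypothesis hK : forall x, K x <-> conv p x.
Hypothesis full_dim : dim_ge d (conv p).
Variables (N : nat) (fa : 'I_N -> 'rV[R]_d) (fb : 'I_N -> R).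
Hypothesis fa_facet : forall t, facet_ineq p (fa t) (fb t).
Hypothesis fa_sep : forall x, ~ conv p x -> exists t, fb t < dotv (fa t) x.

Lemma conv_halfspaces x : conv p x <-> forall t, dotv (fa t) x <= fb t.
Proof.
split => [px t|hx]; first by case: (fa_facet t) => _ hab _; apply: conv_dotv_le px.
by apply: NNPP => /fa_sep[t]; have := hx t; lra.
Qed.

(* Otherwise [- fa t0] would be unbounded on a ray [y0 - s z] (s >= 0) inside K. *)
Lemma opp_normal_in_cone t0 : cone fa (- fa t0).
Proof.
case: (farkas fa (- fa t0)) => // -[z zfa zt0]; exfalso.
have [q [_ qp]] := full_dim; set y0 := q ord0.
have [B hB] := conv_dotv_bounded p (- fa t0).
have ze : 0 < dotv (fa t0) z by move: zt0; rewrite dotvNr dotvC; lra.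
have By0 : 0 <= B + dotv (fa t0) y0 by have := hB y0 (qp ord0); rewrite dotvNl; lra.
pose s := (B + dotv (fa t0) y0 + 1) / dotv (fa t0) z.
have s0 : 0 <= s by rewrite divr_ge0 ?ltW //; lra.
have /hB : conv p (y0 - s *: z).
  apply/conv_halfspaces => t; rewrite dotvBr dotvZr.
  have := proj1 (conv_halfspaces y0) (qp ord0) t; have := zfa t; rewrite dotvC => h1 h2.
  by have := mulr_ge0 s0 h1; lra.
by rewrite dotvNl dotvBr dotvZr /s mulfVK ?gt_eqF //; lra.
Qed.

Section Piece.
Variables (t0 : 'I_N) (k : nat) (e : 'I_k -> 'I_N) (lam : 'I_k -> R).
Hypothesis lam_gt0 : forall j, 0 < lam j.
Hypothesis opp_comb : - fa t0 = \sum_j lam j *: fa (e j).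
Hypothesis free : row_free (\matrix_j fa (e j)).

Let L := (\matrix_j fa (e j))^T.
Let bb j := fb (e j).

Definition piece_index (f : option 'I_k) : 'I_N := if f is Some j then e j else t0.

Definition piece (x : 'rV[R]_d) : Prop := simplex_ineqs lam bb (fb t0) (x *m L).

Lemma dotv_simplex_normal_mulmx f x :
  dotv (simplex_normal lam f) (x *m L) = dotv (fa (piece_index f)) x.
Proof.
case: f => [j|] /=; first by rewrite dotv_delta mul_rows_tr.
rewrite dotvNl dotv_row -[fa t0]opprK opp_comb dotvNl dotv_suml; congr (- _).
by apply: eq_bigr => j _; rewrite mul_rows_tr dotvZl.
Qed.

Lemma pieceP x : piece x <-> forall f, dotv (fa (piece_index f)) x <= fb (piece_index f).
Proof.
by split => hx f; have := hx f; rewrite dotv_simplex_normal_mulmx; case: f.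
Qed.

Lemma conv_sub_piece x : conv p x -> piece x.
Proof. by move=> /conv_halfspaces px; apply/pieceP => f. Qed.

Lemma piece_sub_halfspace x : piece x -> dotv (fa t0) x <= fb t0.
Proof. by move/pieceP/(_ None). Qed.

Lemma piece_width_gt0 : 0 < fb t0 + \sum_j lam j * bb j.
Proof.
have low y : conv p y -> - \sum_j lam j * bb j <= dotv (fa t0) y.
  move/conv_halfspaces => py; rewrite -[fa t0]opprK opp_comb dotvNl lerN2 dotv_suml.
  by apply: ler_sum => j _; rewrite dotvZl ler_pM2l //; apply: py.
have up y : conv p y -> dotv (fa t0) y <= fb t0 by move/conv_halfspaces.
have [q [_ qp]] := full_dim; rewrite lt_def; apply/andP; split; last first.
  by have := low _ (qp ord0); have := up _ (qp ord0); lra.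
apply/eqP => width0; case: (fa_facet t0) => fa0 _ _.
have [fa00 _] : fa t0 = 0 /\ fb t0 = 0.
  apply: (vertices_hyperplane_eq0 full_dim) => i; apply/eqP; rewrite eq_le.
  by have := low _ (conv_vertex p i); have := up _ (conv_vertex p i) => -> /=; lra.
by rewrite fa00 eqxx in fa0.
Qed.

Lemma piece_facet f :
  facet K (fun x => K x /\ dotv (fa (piece_index f)) x = fb (piece_index f)).
Proof. exact: facet_ineq_facet hK (fa_facet _). Qed.

Lemma piece_strip : (0 < k)%N -> (k < d)%N -> good_piece K piece.
Proof.
move=> k0 kd; right; exists k, L, (simplex_ineqs lam bb (fb t0)).
split=> //; split=> //; split; first by rewrite mxrank_tr; apply/eqP.
split; first exact: simplex_ineqs_full_simplex lam_gt0 piece_width_gt0.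
split=> // G hG.
have [f hf] := facet_sub_ineq (fun y => iff_refl _) None
  (simplex_normal_neq0 lam_gt0 ^~ k0) hG.
eexists; split; first exact: piece_facet f.
move=> x [Kx hx]; apply: hf; first exact/conv_sub_piece/hK.
by rewrite dotv_simplex_normal_mulmx hx; case: f {hx}.
Qed.

Lemma piece_simplex : k = d -> good_piece K piece.
Proof.
move=> kd; left; split.
  apply: (full_simplex_mulmx kd); first by rewrite /row_free mxrank_tr (eqP free) kd.
  exact: simplex_ineqs_full_simplex lam_gt0 piece_width_gt0.
move=> G hG; have fa0 f : fa (piece_index f) != 0 by case: (fa_facet (piece_index f)).
have [f hf] := facet_sub_ineq pieceP None fa0 hG.
eexists; split; first exact: piece_facet f.
by move=> x [Kx hx]; apply: hf hx; apply/conv_sub_piece/hK.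
Qed.

End Piece.

Lemma exists_piece t0 : exists S : 'rV[R]_d -> Prop,
  [/\ good_piece K S, forall x, K x -> S x & forall x, S x -> dotv (fa t0) x <= fb t0].
Proof.
have fa0 : - fa t0 != 0 by rewrite oppr_eq0; case: (fa_facet t0).
have [k [e [lam [k0 lam_gt0 opp_comb free]]]] := caratheodory fa0 (opp_normal_in_cone t0).
exists (piece t0 e lam); split.
- have : (k <= d)%N by rewrite -(eqP free) rank_leq_col.
  rewrite leq_eqVlt => /orP[/eqP kd|kd]; first exact: piece_simplex.
  exact: piece_strip.
- by move=> x /hK; apply: conv_sub_piece.
- exact: piece_sub_halfspace.
Qed.

End Pieces.

Theorem theorem4p5 (R : realType) (d : nat) (K : 'rV[R]_d -> Prop) :
  polytope K -> dim_ge d K ->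
  exists (M : nat) (S : 'I_M -> 'rV[R]_d -> Prop),
    (forall x, K x <-> forall j, S j x) /\
    (forall j, good_piece K (S j)).
Proof.
move=> [m [p hK]] [q [hq qK]].
have full_dim : dim_ge d (conv p) by exists q; split => // i; apply/hK.
case: (posnP d) => [d0|d0].
  subst d; exists 0%N, (fun _ _ => True); split => [x|[] //].
  by split => // _; rewrite (_ : x = q ord0) //; apply/rowP => -[].
have [N [fa [fb [fa_facet fa_sep]]]] := facet_family full_dim d0.
have [S hS] := fin_all_exists (exists_piece hK full_dim fa_facet fa_sep).
exists N, S; split => [x|t]; last by case: (hS t).
split => [Kx t|Sx]; first by case: (hS t) => _ /(_ x Kx).
apply/hK/(conv_halfspaces fa_facet fa_sep) => t.
by case: (hS t) => _ _; apply.
Qed.
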